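(* Let $-1<q<1$, $q\ne0$. For $s\in\frac12\mathbb Z_+$ let $\varphi_s:{\rm Pol}(SU_q(2))\to M_{2s+1}$ be the homomorphism associated to the $AN_q$-matrix $A_s$, and let $v_s^{(t)}=(\mathrm{id}\otimes\varphi_s)(u^{(t)})\in M_{2t+1}\otimes M_{2s+1}$. Then there is a constant $C_q$ depending only on $q$ such that $$|q|^{-2st}\le\|v_s^{(t)}\|_\infty\le C_q^s|q|^{-2st}\quad\text{for all }s,t\in\tfrac12\mathbb Z_+.$$
   Context: ${\rm Pol}(SU_q(2))$ is the $*$-algebra generated by $a_q,c_q$ subject to $a_q^*a_q+c_q^*c_q=1=a_qa_q^*+q^2c_q^*c_q$, $c_q^*c_q=c_qc_q^*$, $a_qc_q=qc_qa_q$, $a_qc_q^*=qc_q^*a_q$, with coproduct $\Delta(a_q)=a_q\otimes a_q-qc_q^*\otimes c_q$, $\Delta(c_q)=c_q\otimes a_q+a_q^*\otimes c_q$; $u^{(t)}\in M_{2t+1}({\rm Pol}(SU_q(2)))$, $t\in\frac12\mathbb Z_+$, are its irreducible unitary representations, $u^{(1/2)}=\begin{bmatrix}a_q&-qc_q^*\\c_q&a_q^*\end{bmatrix}$. $A_s=\begin{bmatrix}x_s&y_s\\0&x_s^{-1}\end{bmatrix}$ acts on $\ell^2_{2s+1}$ with basis $e_{-s},\dots,e_s$ by $x_se_k=q^ke_k$, $y_se_k=\sqrt{|q|^{-2s}-|q|^{-2k}-|q|^{2k+2}+|q|^{2s+2}}\,e_{k+1}$, $e_{s+1}=0$ (for $q<0$,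 $q^k:=|q|^ke^{i\pi k}$). $\varphi_s$ is the unique unital homomorphism with $\varphi_s(a_q)=x_s$, $\varphi_s(-qc_q^* )=y_s$, $\varphi_s(c_q)=0$, $\varphi_s(a_q^* )=x_s^{-1}$. $\|\cdot\|_\infty$ is the operator norm. *)

From HB Require Import structures.
From mathcomp Require Import all_boot all_order all_algebra.
From mathcomp Require Import all_classical all_reals all_analysis.
From mathcomp Require Import complex.
Import Order.TTheory GRing.Theory Num.Theory.
Local Open Scope ring_scope.
Local Open Scope classical_set_scope.
Local Open Scope complex_scope.

Section SUq2.
Variable R : realType.
Local Notation C := R[i].

(* Half-integer parametrisation: s = m/2 with m : nat; the space
   \ell^2_{2s+1} has basis e_{-s},...,e_s, and e_k is the ordinal
   j : 'I_(m.+1) with k = -s + j. *)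
Definition hk (m : nat) (j : 'I_m.+1) : R := j%:R - m%:R / 2.

(* q^k for a half-integer k = (2j - m)/2 :
   |q|^k for q > 0, and |q|^k e^{i pi k} for q < 0, where
   e^{i pi k} = 'i ^ (2k) = 'i ^ (2j - m). *)
Definition qhalfpow (q : R) (m : nat) (j : 'I_m.+1) : C :=
  (powR `|q| (hk m j))%:C *
  (if q < 0 then ('i : C) ^ ((2 * j)%:Z - m%:Z) else 1).

(* x_s e_k = q^k e_k  (matrices act on column vectors: (x)_{k,l}) *)
Definition xs (q : R) (m : nat) : 'M[C]_m.+1 :=
  \matrix_(a < m.+1, b < m.+1) (if a == b then qhalfpow q m b else 0).

(* y_s e_k = sqrt(|q|^{-2s} - |q|^{-2k} - |q|^{2k+2} + |q|^{2s+2}) e_{k+1},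
   with e_{s+1} = 0 *)
Definition ycoef (q : R) (m : nat) (j : 'I_m.+1) : R :=
  Num.sqrt (powR `|q| (- m%:R) - powR `|q| (- (2 * hk m j))
            - powR `|q| (2 * hk m j + 2) + powR `|q| (m%:R + 2)).

Definition ys (q : R) (m : nat) : 'M[C]_m.+1 :=
  \matrix_(a < m.+1, b < m.+1)
     (if a == b.+1 :> nat then (ycoef q m b)%:C else 0).

(* the AN_q-matrix A_s = [[x_s, y_s], [0, x_s^{-1}]]
   = (id (x) phi_s)(u^{(1/2)}), entries indexed by 'I_2 *)
Definition As (q : R) (m : nat) (a b : 'I_2) : 'M[C]_m.+1 :=
  if a == 0 then (if b == 0 then xs q m else ys q m)
  else (if b == 0 then 0 else invmx (xs q m)).

(* Spin t = n/2 representation u^{(t)} realised as the q-symmetric part of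
   the n-fold tensor power u^{(1/2)} T ... T u^{(1/2)}
   ((u T w)_{(ij),(kl)} = u_{ik} w_{jl}).  Words w : 'I_n -> 'I_2 index the
   standard basis of (C^2)^{(x) n}; the invariant subspace is spanned by
     f_k = sum_{w with k letters 1} q^{inv w} e_w,
   inv w = #{ i < j : w_i = 0, w_j = 1 }. *)
Definition wt (n : nat) (w : {ffun 'I_n -> 'I_2}) : nat :=
  #|[set i : 'I_n | w i == 1]|.
Definition winv (n : nat) (w : {ffun 'I_n -> 'I_2}) : nat :=
  #|[set p : 'I_n * 'I_n | (p.1 < p.2)%N && (w p.1 == 0) && (w p.2 == 1)]|.
Definition fnorm (q : R) (n : nat) (k : 'I_n.+1) : R :=
  Num.sqrt (\sum_(w : {ffun 'I_n -> 'I_2} | wt n w == k) q ^+ (2 * winv n w)).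

(* (id (x) phi_s)(u^{(1/2)} T ... T u^{(1/2)}) block (w, w') *)
Definition tensA (q : R) (m n : nat) (w w' : {ffun 'I_n -> 'I_2})
  : 'M[C]_m.+1 := \prod_(i < n) As q m (w i) (w' i).

(* v_s^{(t)} = (id (x) phi_s)(u^{(t)}), as a block matrix: block (k,l) *)
Definition vblock (q : R) (m n : nat) (k l : 'I_n.+1) : 'M[C]_m.+1 :=
  ((fnorm q n k * fnorm q n l)^-1)%:C *:
  \sum_(w : {ffun 'I_n -> 'I_2} | wt n w == k)
   \sum_(w' : {ffun 'I_n -> 'I_2} | wt n w' == l)
     ((q ^+ winv n w * q ^+ winv n w')%:C *: tensA q m n w w').

(* v_s^{(t)} in M_{2t+1} (x) M_{2s+1}, indexed by pairs (k, a) *)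
Definition vst (q : R) (m n : nat)
  (p p' : 'I_n.+1 * 'I_m.+1) : C :=
  vblock q m n p.1 p'.1 p.2 p'.2.

Definition l2norm (I : finType) (v : I -> C) : R :=
  Num.sqrt (\sum_(i : I) (Normc.normc (v i)) ^+ 2).
Definition opnorm (I : finType) (M : I -> I -> C) : R :=
  sup [set r : R | exists v : I -> C,
         l2norm I v <= 1 /\ r = l2norm I (fun i => \sum_(j : I) M i j * v j)].

End SUq2.

Arguments opnorm {R I}.
Arguments vst {R}.

(* Under [phi_s] every entry of [u^(1/2)] becomes a matrix moving [e_k] to a
   multiple of [e_(k + d)] with [d] in {0, 1}, all of whose entries have modulus
   at most [|q|^(-s)].  Realising [u^(t)] in the [2t]-fold tensor power of
   [u^(1/2)], every entry of [v_s^(t)] is then at most [|q|^(-2st)] times a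
   product of two Gaussian binomials [[2t choose k]_|q| <= prod_i (1 - |q|^i)^-1
   <= exp ((1 - |q|)^-2) =: K].  The number of letters 1 is conserved, so the
   entry at [((k, a), (l, b))] vanishes unless [k + a = l + b]: rows and
   columns have at most [2s + 1] nonzero entries, and Schur's test gives
   [||v_s^(t)|| <= (2s + 1) K^2 |q|^(-2st) <= (2 K^2)^(2s) |q|^(-2st)] for
   [s > 0], while [v_0^(t)] is the identity.  The lower bound is the modulus
   [|q|^(-2st)] of the corner entry. *)

From HB Require Import structures.
From mathcomp Require Import all_boot all_order all_algebra.
From mathcomp Require Import all_classical all_reals all_analysis.
From mathcomp Require Import complex.
From mathcomp Require Import ring lra zify.
Import Order.TTheory GRing.Theory Num.Theory Normc.

Set Implicit Arguments.
Unset Strict Implicit.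
Unset Printing Implicit Defensive.

Local Open Scope ring_scope.
Local Open Scope complex_scope.

#[local] Arguments hk {R}.
#[local] Arguments qhalfpow {R}.
#[local] Arguments xs {R}.
#[local] Arguments ycoef {R}.
#[local] Arguments As {R}.
#[local] Arguments fnorm {R}.
#[local] Arguments tensA {R}.
#[local] Arguments vblock {R}.

Local Notation word n := {ffun 'I_n -> 'I_2}.

Lemma I2_cases (x : 'I_2) : x = 0 \/ x = 1.
Proof. by case: x => [[|[|//]] hx]; [left|right]; apply: val_inj. Qed.

Lemma big_I2 (V : nmodType) (F : 'I_2 -> V) : \sum_(b < 2) F b = F 0 + F 1.
Proof. by rewrite big_ord_recl big_ord1; congr (F _ + F _); apply: val_inj. Qed.

Lemma in_set_bool (T : Type) (P : pred T) x : (x \in [set y | P y]%classic) = P x.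
Proof. by apply/idP/idP; rewrite in_setE. Qed.

Definition cons_word n (b : 'I_2) (w : word n) : word n.+1 :=
  [ffun i => if unlift ord0 i is Some j then w j else b].

Lemma cons_word0 n b (w : word n) : cons_word b w ord0 = b.
Proof. by rewrite ffunE unlift_none. Qed.

Lemma cons_wordS n b (w : word n) j : cons_word b w (lift ord0 j) = w j.
Proof. by rewrite ffunE liftK. Qed.

Lemma wtE n (w : word n) : wt n w = (\sum_(i < n) (w i == 1%R : nat))%N.
Proof.
rewrite /wt -sum1_card big_mkcond /=; apply: eq_bigr => i _.
by rewrite in_set_bool; case: eqP.
Qed.

Lemma winvE n (w : word n) : winv n w =
  (\sum_(i < n) \sum_(j < n) [&& (i < j)%N, w i == 0%R & w j == 1%R] : nat)%N.
Proof.
rewrite /winv -sum1_card big_mkcond /= pair_big /=.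
by apply: eq_bigr => -[i j] _; rewrite in_set_bool /= -andbA; case: [&& _, _ & _].
Qed.

Lemma wt_cons n b (w : word n) : wt n.+1 (cons_word b w) = ((b == 1%R) + wt n w)%N.
Proof.
rewrite !wtE big_ord_recl cons_word0; congr addn.
by apply: eq_bigr => i _; rewrite cons_wordS.
Qed.

Lemma winv_cons n b (w : word n) :
  winv n.+1 (cons_word b w) = ((b == 0%R) * wt n w + winv n w)%N.
Proof.
rewrite !winvE wtE big_ord_recl /= big_ord_recl /= cons_word0; congr addn.
  rewrite big_distrr /=; apply: eq_bigr => j _.
  by rewrite cons_wordS; case: (b == 0); case: (w j == 1).
apply: eq_bigr => i _; rewrite big_ord_recl add0n; apply: eq_bigr => j _.
by rewrite !cons_wordS /bump !leq0n !add1n ltnS.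
Qed.

Lemma sum_word_cons (V : nmodType) n (F : word n.+1 -> V) :
  \sum_w F w = \sum_(b < 2) \sum_(w : word n) F (cons_word b w).
Proof.
rewrite pair_big /= (reindex (fun p : 'I_2 * word n => cons_word p.1 p.2)) //=.
exists (fun w : word n.+1 => (w ord0, [ffun j => w (lift ord0 j)])).
  move=> [b w] _ /=; rewrite cons_word0; congr pair.
  by apply/ffunP => j; rewrite ffunE cons_wordS.
move=> w _; apply/ffunP => i; rewrite ffunE.
by case: unliftP => [j|] ->; rewrite ?liftK ?unlift_none ?ffunE.
Qed.

Lemma wt_eq0 n (w : word n) : (wt n w == 0%N) = (w == [ffun => 0]).
Proof.
rewrite wtE sum_nat_eq0; apply/forallP/eqP => [w0|-> i]; last by rewrite ffunE.
by apply/ffunP => i; rewrite ffunE; have := w0 i; case: (I2_cases (w i)) => ->.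
Qed.

Lemma winv_const0 n : winv n [ffun => 0] = 0%N.
Proof. by rewrite winvE big1 // => i _; rewrite big1 // => j _; rewrite !ffunE andbF. Qed.


Definition gbinom (R : pzSemiRingType) (a : R) n k :=
  \sum_(w : word n | wt n w == k) a ^+ winv n w.

Lemma gbinomS (R : comPzSemiRingType) (a : R) n k :
  gbinom a n.+1 k = a ^+ k * gbinom a n k + (if k is k'.+1 then gbinom a n k' else 0).
Proof.
rewrite /gbinom big_mkcond sum_word_cons big_I2 /=; congr (_ + _).
  rewrite [in RHS]big_mkcond mulr_sumr; apply: eq_bigr => w _.
  rewrite wt_cons winv_cons /= add0n mul1n.
  by case: eqP => [->|]; rewrite ?mulr0 // exprD.
case: k => [|k]; first by apply: big1 => w _; rewrite wt_cons.
rewrite [in RHS]big_mkcond; apply: eq_bigr => w _.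
by rewrite wt_cons winv_cons /= add1n eqSS mul0n add0n.
Qed.

Section GaussianBinomialBound.
Variables (R : realType) (a : R).
Hypotheses (a_ge0 : 0 <= a) (a_lt1 : a < 1).

Definition qpochV k := \prod_(i < k) (1 - a ^+ i.+1)^-1.

Lemma qpochVS k : qpochV k.+1 = qpochV k * (1 - a ^+ k.+1)^-1.
Proof. by rewrite /qpochV big_ord_recr. Qed.

Lemma exprS_lt1 i : a ^+ i.+1 < 1.
Proof. by rewrite exprn_ilt1 // (le_lt_trans _ a_lt1). Qed.

Lemma qpochV_ge1 k : 1 <= qpochV k.
Proof.
elim: k => [|k IH]; first by rewrite /qpochV big_ord0.
rewrite qpochVS; apply: (le_trans IH); rewrite ler_peMr ?(le_trans ler01 IH) //.
by rewrite invf_ge1 ?subr_gt0 ?exprS_lt1 // lerBlDr lerDl exprn_ge0.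
Qed.

Lemma gbinom_ge0 n k : 0 <= gbinom a n k.
Proof. by apply: sumr_ge0 => w _; rewrite exprn_ge0. Qed.

Lemma gbinom_le_qpochV n k : gbinom a n k <= qpochV k.
Proof.
elim: n k => [|n IH] k.
  apply: le_trans (qpochV_ge1 k).
  apply: (@le_trans _ _ (\sum_(w : word 0) 1)).
    rewrite [X in X <= _]big_mkcond; apply: ler_sum => w _.
    by case: ifP => _ //; rewrite exprn_ile1 // ltW.
  by rewrite sumr_const card_ffun !card_ord.
rewrite gbinomS; case: k => [|k]; first by rewrite expr0 mul1r addr0.
apply: (@le_trans _ _ (a ^+ k.+1 * qpochV k.+1 + qpochV k)).
  by apply: lerD; [apply: ler_wpM2l; rewrite ?exprn_ge0 | ].
have factor_neq0 : 1 - a ^+ k.+1 != 0 by rewrite subr_eq0 eq_sym lt_eqF // exprS_lt1.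
by rewrite qpochVS le_eqVlt; apply/orP; left; apply/eqP; field.
Qed.

(* Induction on [log (qpochV k) <= c (1 - a^k)] with [c = (1 - a)^-2], using
   [-log (1 - x) <= x / (1 - a)] for [x = a^(k+1)] and
   [a^(k+1) / (1 - a) = c a^k (1 - a) a <= c a^k (1 - a)]. *)
Lemma qpochV_le_expR k : qpochV k <= expR (((1 - a) ^+ 2)^-1 * (1 - a ^+ k)).
Proof.
have sub1a_gt0 : 0 < 1 - a by rewrite subr_gt0.
set c := ((1 - a) ^+ 2)^-1.
have c_gt0 : 0 < c by rewrite invr_gt0 exprn_gt0.
elim: k => [|k IH]; first by rewrite /qpochV big_ord0 expr0 subrr mulr0 expR0.
rewrite qpochVS; set x := a ^+ k.+1.
have x_ge0 : 0 <= x by rewrite exprn_ge0.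
have x_le_a : x <= a by rewrite /x exprS ler_piMr // exprn_ile1 // ltW.
have sub1x_gt0 : 0 < 1 - x by rewrite subr_gt0 exprS_lt1.
have inv_le_expR : (1 - x)^-1 <= expR (x / (1 - a)).
  apply: le_trans (expR_ge1Dx _).
  have -> : (1 - x)^-1 = 1 + x / (1 - x) by field; rewrite gt_eqF.
  by rewrite lerD2l ler_wpM2l // lef_pV2 ?posrE // lerD2l lerN2.
apply: le_trans (ler_pM (le_trans ler01 (qpochV_ge1 _)) _ IH inv_le_expR) _.
  by rewrite invr_ge0 ltW.
rewrite -expRD ler_expR /x exprS; set y := a ^+ k.
have y_ge0 : 0 <= y by rewrite exprn_ge0.
have -> : a * y / (1 - a) = c * ((1 - a) * (a * y)) by rewrite /c; field; rewrite gt_eqF.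
rewrite -mulrDr ler_pM2l //.
have := mulr_ge0 y_ge0 (exprn_ge0 2 (ltW sub1a_gt0)); nra.
Qed.

Definition qbound := expR (((1 - a) ^+ 2)^-1).

Lemma qbound_ge1 : 1 <= qbound.
Proof. by rewrite /qbound -expR0 ler_expR invr_ge0 sqr_ge0. Qed.

Lemma gbinom_le_qbound n k : gbinom a n k <= qbound.
Proof.
apply: le_trans (gbinom_le_qpochV n k) _; apply: le_trans (qpochV_le_expR k) _.
rewrite ler_expR; apply: ler_piMr; first by rewrite invr_ge0 sqr_ge0.
by rewrite lerBlDr lerDl exprn_ge0.
Qed.

End GaussianBinomialBound.

Section ComplexModulus.
Variable R : rcfType.

Lemma normc_ge0 (x : R[i]) : 0 <= normc x.
Proof. by case: x => u v; rewrite /normc sqrtr_ge0. Qed.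

Lemma normc_real (x : R) : normc x%:C = `|x|.
Proof. by rewrite /normc /= expr0n /= addr0 sqrtr_sqr. Qed.

Lemma normcX (x : R[i]) k : normc (x ^+ k) = normc x ^+ k.
Proof. by elim: k => [|k IH]; rewrite ?normc1 // !exprS normcM IH. Qed.

Lemma normc_ipow (z : int) : normc ('i ^ z : R[i]) = 1.
Proof.
have normci : normc ('i : R[i]) = 1 by rewrite /normc /= expr0n expr1n add0r sqrtr1.
by case: z => k; rewrite /= ?normcV normcX normci expr1n ?invr1.
Qed.

Lemma normc_sum (I : Type) (r : seq I) (P : pred I) (F : I -> R[i]) :
  normc (\sum_(i <- r | P i) F i) <= \sum_(i <- r | P i) normc (F i).
Proof.
elim: r => [|x r IH]; first by rewrite !big_nil normc0.
rewrite !big_cons; case: ifP => _ //.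
exact: le_trans (le_normcD _ _) (lerD (lexx _) IH).
Qed.

End ComplexModulus.

Lemma ler_sqr_sum (R : realFieldType) (I : finType) (A : {pred I}) (f : I -> R) :
  (\sum_(i in A) f i) ^+ 2 <= #|A|%:R * \sum_(i in A) f i ^+ 2.
Proof.
set S2 := \sum_(i in A) f i ^+ 2.
have E1 : \sum_(i in A) \sum_(j in A) f i ^+ 2 = #|A|%:R * S2.
  under eq_bigr do rewrite sumr_const.
  by rewrite /S2 mulr_sumr; apply: eq_bigr => i _; rewrite mulr_natl.
have E2 : \sum_(i in A) \sum_(j in A) f j ^+ 2 = #|A|%:R * S2.
  by rewrite sumr_const mulr_natl.
have -> : #|A|%:R * S2 = \sum_(i in A) \sum_(j in A) (f i ^+ 2 + f j ^+ 2) / 2.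
  transitivity ((\sum_(i in A) \sum_(j in A) f i ^+ 2 +
                 \sum_(i in A) \sum_(j in A) f j ^+ 2) / 2); first by rewrite E1 E2; field.
  rewrite -big_split mulr_suml; apply: eq_bigr => i _.
  by rewrite -big_split mulr_suml.
rewrite expr2 mulr_suml; apply: ler_sum => i _.
rewrite mulr_sumr; apply: ler_sum => j _.
have := sqr_ge0 (f i - f j); nra.
Qed.

Section OperatorNorm.
Variables (R : realType) (I : finType).
Implicit Types (v : I -> R[i]) (M : I -> I -> R[i]).

Local Notation l2norm := (l2norm R I).

Lemma l2norm0 : l2norm (fun _ => 0) = 0.
Proof. by rewrite /l2norm big1 ?sqrtr0 // => i _; rewrite normc0 expr0n. Qed.

Lemma normc_le_l2norm v p : normc (v p) <= l2norm v.
Proof.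
rewrite /l2norm -[X in X <= _]ger0_norm ?normc_ge0 // -sqrtr_sqr ler_sqrt; last first.
  by apply: sumr_ge0 => i _; exact: sqr_ge0.
by rewrite (bigD1 p) //= lerDl; apply: sumr_ge0 => i _; exact: sqr_ge0.
Qed.

Lemma l2norm_delta p0 : l2norm (fun p => (p == p0)%:R) = 1.
Proof.
rewrite /l2norm (bigD1 p0) //= eqxx big1 ?addr0 ?normc1 ?expr1n ?sqrtr1 //.
by move=> i /negbTE ->; rewrite normc0 expr0n.
Qed.

(* Schur's test: when [M] only links indices of the same class and classes
   have at most [N] elements, rows and columns of [M] have at most [N]
   nonzero entries. *)
Lemma l2norm_apply_le_class M (cl : I -> nat) (E : R) (N : nat) :
  0 <= E ->
  (forall p p', M p p' != 0 -> cl p = cl p') ->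
  (forall p p', normc (M p p') <= E) ->
  (forall p, #|[pred p' | cl p' == cl p]| <= N)%N ->
  forall v, l2norm (fun p => \sum_p' M p p' * v p') <= N%:R * E * l2norm v.
Proof.
move=> E_ge0 M_cl M_le card_cl v.
pose x p := normc (v p); pose S p := [pred p' | cl p' == cl p].
have card_S p : (#|S p| <= N)%N := card_cl p.
have row_le p : normc (\sum_p' M p p' * v p') <= \sum_(p' in S p) E * x p'.
  apply: le_trans (normc_sum _ _ _) _.
  rewrite [X in _ <= X]big_mkcond /=; apply: ler_sum => p' _.
  rewrite inE /=; case: eqP => h; first by rewrite normcM ler_wpM2r ?normc_ge0.
  have -> : M p p' = 0 by apply/eqP; apply: contraNT (introN eqP h) => /M_cl ->.
  by rewrite mul0r normc0.
have row_sqr_le p : normc (\sum_p' M p p' * v p') ^+ 2 <=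
    N%:R * \sum_(p' in S p) (E * x p') ^+ 2.
  apply: (@le_trans _ _ ((\sum_(p' in S p) E * x p') ^+ 2)).
    rewrite ler_pXn2r ?nnegrE ?normc_ge0 ?sumr_ge0 // => p' _.
    by rewrite mulr_ge0 ?normc_ge0.
  apply: le_trans (ler_sqr_sum _ _) _.
  by rewrite ler_wpM2r ?ler_nat ?card_S ?sumr_ge0 // => p' _; exact: sqr_ge0.
have col_le : \sum_p \sum_(p' in S p) (E * x p') ^+ 2 <=
    N%:R * \sum_p' (E * x p') ^+ 2.
  under eq_bigr do rewrite big_mkcond /=.
  rewrite exchange_big /= mulr_sumr; apply: ler_sum => p' _.
  have -> : \sum_p (if p' \in S p then (E * x p') ^+ 2 else 0) =
      \sum_(p in S p') (E * x p') ^+ 2.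
    by rewrite [RHS]big_mkcond; apply: eq_bigr => p _; rewrite !inE eq_sym.
  by rewrite sumr_const mulr_natl; apply: ler_wpMn2l; [exact: sqr_ge0 | exact: card_S].
have sum_ge0 : 0 <= \sum_i normc (v i) ^+ 2 by apply: sumr_ge0 => i _; exact: sqr_ge0.
rewrite /l2norm -[X in _ <= X]ger0_norm ?mulr_ge0 ?sqrtr_ge0 //.
rewrite -sqrtr_sqr ler_sqrt ?sqr_ge0 // exprMn sqr_sqrtr //.
apply: le_trans (ler_sum _ (fun p _ => row_sqr_le p)) _.
rewrite -mulr_sumr; apply: le_trans (ler_wpM2l (ler0n _ _) col_le) _.
rewrite mulrA -expr2 exprMn -mulrA ler_wpM2l ?sqr_ge0 // mulr_sumr.
by under eq_bigr do rewrite exprMn.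
Qed.

Lemma opnorm_le M B :
  0 <= B -> (forall v, l2norm v <= 1 -> l2norm (fun i => \sum_j M i j * v j) <= B) ->
  opnorm M <= B.
Proof.
move=> B_ge0 hB; apply: ge_sup.
  by exists (l2norm (fun i => \sum_j M i j * 0)), (fun _ => 0); rewrite l2norm0.
by move=> r [v [hv ->]]; exact: hB.
Qed.

Lemma normc_diag_le_opnorm M B p0 :
  (forall v, l2norm v <= 1 -> l2norm (fun i => \sum_j M i j * v j) <= B) ->
  normc (M p0 p0) <= opnorm M.
Proof.
move=> hB; pose v p := (p == p0)%:R : R[i].
apply: le_trans (ub_le_sup _ _); last 2 first.
- by exists B => r [w [hw ->]]; exact: hB.
- by exists v; split; rewrite ?l2norm_delta.
apply: le_trans (normc_le_l2norm _ p0).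
rewrite (bigD1 p0) //= /v eqxx mulr1 big1 ?addr0 // => i /negbTE ->.
by rewrite mulr0.
Qed.

End OperatorNorm.

Lemma sumr_mul_delta (R : pzSemiRingType) (I : finType) (P : pred I) (F : I -> R) x :
  \sum_(y | P y) F y * (x == y)%:R = if P x then F x else 0.
Proof.
rewrite big_mkcond (bigD1 x) //= eqxx mulr1 big1 ?addr0 => [|y /negbTE yx].
  by case: ifP.
by rewrite eq_sym yx mulr0; case: ifP.
Qed.

Lemma prod_mx11 (R : pzSemiRingType) n (F : 'I_n -> 'M[R]_1) :
  (\prod_k F k) ord0 ord0 = \prod_k F k ord0 ord0.
Proof.
elim: n F => [|n IH] F; first by rewrite !big_ord0 mxE.
by rewrite !big_ord_recr /= -IH -mulmxE mxE big_ord1.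
Qed.

Section ShiftMatrices.
Variables (R : rcfType) (m : nat).
Implicit Type M : 'M[R[i]]_m.+1.

Definition is_shift_mx (d : int) (b : R) M :=
  forall i j, (M i j != 0 -> i%:Z = j%:Z + d) /\ normc (M i j) <= b.

Lemma is_shift_mx_ge0 d b M : is_shift_mx d b M -> 0 <= b.
Proof. by move=> hM; exact: le_trans (normc_ge0 _) (hM ord0 ord0).2. Qed.

Lemma is_shift_mx1 : is_shift_mx 0 1 1%:M.
Proof.
move=> i j; rewrite mxE; have [->|ij] := eqVneq i j.
  by rewrite mulr1n normc1 addr0.
by rewrite mulr0n eqxx normc0 ler01.
Qed.

Lemma is_shift_mx_mul d1 d2 b1 b2 M N :
  is_shift_mx d1 b1 M -> is_shift_mx d2 b2 N -> is_shift_mx (d1 + d2) (b1 * b2) (M *m N).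
Proof.
move=> hM hN i j; rewrite mxE.
have b_ge0 : 0 <= b1 * b2 by rewrite mulr_ge0 ?(is_shift_mx_ge0 hM) ?(is_shift_mx_ge0 hN).
have [c hc | none] := pickP (fun c => M i c * N c j != 0); last first.
  by rewrite big1 ?normc0 ?eqxx // => c _; move: (none c) => /negbFE/eqP.
move: (hc); rewrite mulf_eq0 negb_or => /andP[/(hM i c).1 ic /(hN c j).1 cj].
rewrite (bigD1 c) //= big1 ?addr0; last first.
  move=> c' c'c; apply/eqP; apply: contraNT c'c.
  rewrite mulf_eq0 negb_or => /andP[/(hM i c').1 ic' _].
  have [] : c'%:Z = c%:Z by apply: (addIr d1); rewrite -ic' -ic.
  by move=> /val_inj ->.
split; first by rewrite ic cj addrAC addrA.
by rewrite normcM ler_pM ?normc_ge0 ?(hM i c).2 ?(hN c j).2.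
Qed.

Lemma is_shift_mx_prod n (F : 'I_n -> 'M[R[i]]_m.+1) (d : 'I_n -> int) b :
  (forall k, is_shift_mx (d k) b (F k)) ->
  is_shift_mx (\sum_k d k) (b ^+ n) (\prod_k F k).
Proof.
elim: n F d => [|n IH] F d hF; first by rewrite !big_ord0 expr0; exact: is_shift_mx1.
rewrite !big_ord_recr /= exprSr.
exact: is_shift_mx_mul (IH _ _ (fun k => hF _)) (hF _).
Qed.

End ShiftMatrices.

Lemma hk_range (R : realType) m (j : 'I_m.+1) : -(m%:R / 2) <= @hk R m j <= m%:R / 2.
Proof.
have j_ge0 : 0 <= j%:R :> R by rewrite ler0n.
have j_le : j%:R <= m%:R :> R by rewrite ler_nat -ltnS ltn_ord.
rewrite /hk; apply/andP; split; lra.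
Qed.

Section EntriesOfAs.
Variables (R : realType) (q : R).
Hypotheses (q_neq0 : q != 0) (normq_lt1 : `|q| < 1).
Variable m : nat.

Let normq_range : 0 < `|q| <= 1.
Proof. by rewrite normr_gt0 q_neq0 ltW. Qed.

(* [|q|^(-s)] with [s = m/2] bounds the moduli of all entries of [A_s]. *)
Definition As_bound := powR `|q| (- (m%:R / 2)).

Lemma As_bound_ge0 : 0 <= As_bound.
Proof. exact: powR_ge0. Qed.

Lemma As_bound_sqr : As_bound ^+ 2 = powR `|q| (- m%:R).
Proof.
rewrite /As_bound -powR_mulrn ?powR_ge0 // -powRrM; congr powR.
by rewrite mulNr divfK ?pnatr_eq0.
Qed.

Lemma normc_qhalfpow j : normc (qhalfpow q m j) = powR `|q| (hk m j).
Proof.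
rewrite /qhalfpow normcM normc_real ger0_norm ?powR_ge0 //.
by case: ifP => _; rewrite ?normc_ipow ?normc1 mulr1.
Qed.

Lemma qhalfpow_neq0 j : qhalfpow q m j != 0.
Proof.
apply/eqP => /(congr1 (@normc R)); rewrite normc_qhalfpow normc0.
by apply/eqP; rewrite gt_eqF // powR_gt0 // normr_gt0.
Qed.

Lemma normc_qhalfpow_le j : normc (qhalfpow q m j) <= As_bound.
Proof. by rewrite normc_qhalfpow; apply: ger_powR; case/andP: (hk_range R j). Qed.

Lemma normc_qhalfpowV_le j : normc (qhalfpow q m j)^-1 <= As_bound.
Proof.
rewrite normcV normc_qhalfpow -powRN; apply: ger_powR => //.
by case/andP: (hk_range R j) => _; rewrite lerNl opprK.
Qed.

Lemma ycoef_le j : ycoef q m j <= As_bound.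
Proof.
rewrite /ycoef -(ger0_norm As_bound_ge0) -[X in _ <= X]sqrtr_sqr.
rewrite ler_sqrt ?sqr_ge0 // As_bound_sqr.
have : powR `|q| (m%:R + 2) <= powR `|q| (2 * hk m j + 2).
  by apply: ger_powR => //; case/andP: (hk_range R j) => _; lra.
have := powR_ge0 `|q| (- (2 * hk m j)); lra.
Qed.

Lemma xsE : xs q m = diag_mx (\row_j qhalfpow q m j).
Proof. by apply/matrixP => i j; rewrite !mxE; case: eqP => [->|]. Qed.

Lemma invmx_xs : invmx (xs q m) = diag_mx (\row_j (qhalfpow q m j)^-1).
Proof.
set D := diag_mx _.
have xsD : xs q m *m D = 1%:M.
  rewrite xsE mul_diag_mx; apply/matrixP => i j; rewrite !mxE.
  by case: eqP => [->|_]; rewrite ?mulr1n ?mulr0n ?mulr0 ?mulfV ?qhalfpow_neq0.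
have [xs_unit _] := mulmx1_unit xsD.
by rewrite -[RHS]mul1mx -(mulVmx xs_unit) -mulmxA xsD mulmx1.
Qed.

Definition letter_shift (x y : 'I_2) : int := (y == 1 : nat)%:Z - (x == 1 : nat)%:Z.

Lemma is_shift_mx_As x y : is_shift_mx (letter_shift x y) As_bound (As q m x y).
Proof.
have bound_ge0 := As_bound_ge0.
case: (I2_cases x) => ->; case: (I2_cases y) => -> i j; rewrite /As /letter_shift /=.
- rewrite /xs mxE; case: ifP => [/eqP ->|_]; last by rewrite eqxx normc0.
  by rewrite subrr addr0 normc_qhalfpow_le.
- rewrite /ys mxE; case: ifP => [/eqP ij|_]; last by rewrite eqxx normc0.
  by rewrite normc_real ger0_norm ?sqrtr_ge0 // ycoef_le; split => // _; rewrite ij; lia.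
- by rewrite mxE eqxx normc0.
- rewrite invmx_xs mxE; have [->|ij] := eqVneq i j; last by rewrite mulr0n eqxx normc0.
  by rewrite mxE mulr1n subrr addr0 normc_qhalfpowV_le.
Qed.

Lemma is_shift_mx_tensA n (w w' : word n) :
  is_shift_mx ((wt n w')%:Z - (wt n w)%:Z) (As_bound ^+ n) (tensA q m n w w').
Proof.
have := is_shift_mx_prod (fun k => is_shift_mx_As (w k) (w' k)).
rewrite /letter_shift sumrB -!(big_morph _ PoszD (erefl 0%:Z)).
by rewrite -!wtE.
Qed.

End EntriesOfAs.

Lemma fnorm_ge1 (R : realType) (q : R) n (k : 'I_n.+1) : 1 <= fnorm q n k.
Proof.
pose w0 := [ffun i : 'I_n => if (i < k)%N then 1 else 0 : 'I_2].
have wt_w0 : wt n w0 = k.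
  rewrite wtE (eq_bigr (fun i : 'I_n => (i < k)%N : nat)); last first.
    by move=> i _; rewrite ffunE; case: ifP.
  have -> : forall n', (\sum_(i < n') ((i < k)%N : nat))%N = minn k n'.
    by elim=> [|n' IH]; rewrite ?big_ord0 ?minn0 // big_ord_recr /= IH; lia.
  by have := ltn_ord k; lia.
have winv_w0 : winv n w0 = 0%N.
  rewrite winvE big1 // => i _; rewrite big1 // => j _; rewrite !ffunE.
  case: (ltnP i k) => hi; case: (ltnP j k) => hj //=; rewrite ?andbF //.
  by case: ltnP => //; lia.
have summand_ge0 (w : word n) : 0 <= q ^+ (2 * winv n w).
  by rewrite exprM exprn_ge0 // sqr_ge0.
rewrite /fnorm -sqrtr1 ler_sqrt ?sumr_ge0 // (bigD1 w0) /=; last by rewrite wt_w0.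
by rewrite winv_w0 muln0 expr0 lerDl sumr_ge0.
Qed.

Section Blocks.
Variables (R : realType) (q : R).
Hypotheses (q_neq0 : q != 0) (normq_lt1 : `|q| < 1).
Variables m n : nat.

Lemma vblockE k l i j : vblock q m n k l i j =
  ((fnorm q n k * fnorm q n l)^-1)%:C *
  \sum_(w | wt n w == k) \sum_(w' | wt n w' == l)
     ((q ^+ winv n w * q ^+ winv n w')%:C * tensA q m n w w' i j).
Proof.
rewrite /vblock mxE summxE; congr (_ * _); apply: eq_bigr => w _.
by rewrite summxE; apply: eq_bigr => w' _; rewrite mxE.
Qed.

Lemma fnorm_prodV_range k l : 0 <= (fnorm q n k * fnorm q n l)^-1 <= 1.
Proof.
have fnorm_prod_ge1 : 1 <= fnorm q n k * fnorm q n l.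
  by rewrite -[1]mulr1 ler_pM ?fnorm_ge1.
by rewrite invr_ge0 invf_le1 ?(le_trans ler01) ?(lt_le_trans ltr01).
Qed.

(* Conservation of the number of letters 1 in [tensA]. *)
Lemma vblock_eq0 (k l : 'I_n.+1) (i j : 'I_m.+1) :
  (k + i != l + j)%N -> vblock q m n k l i j = 0.
Proof.
move=> ikjl; rewrite vblockE big1 ?mulr0 // => w /eqP wk; rewrite big1 // => w' /eqP wl.
have [->|] := eqVneq (tensA q m n w w' i j) 0; first by rewrite mulr0.
move=> /(is_shift_mx_tensA q_neq0 normq_lt1 w w' i j).1.
by rewrite wk wl; move: ikjl; lia.
Qed.

Lemma normc_vblock_le k l i j :
  normc (vblock q m n k l i j) <= As_bound q m ^+ n * qbound `|q| ^+ 2.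
Proof.
have gbinom_le k' := gbinom_le_qbound (normr_ge0 q) normq_lt1 n k'.
have gbinom_ge0 k' := gbinom_ge0 (normr_ge0 q) n k'.
have bound_ge0 : 0 <= As_bound q m ^+ n by rewrite exprn_ge0 ?As_bound_ge0.
case/andP: (fnorm_prodV_range k l) => c_ge0 c_le1.
rewrite vblockE normcM normc_real ger0_norm //.
set S := \sum_(w | _) _.
have S_le : normc S <= gbinom `|q| n k * gbinom `|q| n l * As_bound q m ^+ n.
  apply: le_trans (normc_sum _ _ _) _.
  rewrite /gbinom !mulr_suml; apply: ler_sum => w _.
  apply: le_trans (normc_sum _ _ _) _.
  rewrite mulrAC mulr_sumr; apply: ler_sum => w' _.
  rewrite mulrAC normcM normc_real normrM !normrX ler_wpM2l ?mulr_ge0 ?exprn_ge0 //.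
  exact: (is_shift_mx_tensA q_neq0 normq_lt1 w w' i j).2.
apply: le_trans (ler_pM c_ge0 (normc_ge0 _) c_le1 S_le) _.
by rewrite mul1r mulrC expr2 ler_wpM2l // ler_pM.
Qed.

Lemma vblock_corner : vblock q m n ord0 ord0 ord0 ord0 = qhalfpow q m ord0 ^+ n.
Proof.
have wt0 : (fun w : word n => wt n w == (@ord0 n : nat)) =1 pred1 [ffun => 0].
  by move=> w; exact: wt_eq0.
have fnorm0 : fnorm q n ord0 = 1.
  by rewrite /fnorm (big_pred1 _ wt0) winv_const0 muln0 expr0 sqrtr1.
rewrite vblockE fnorm0 mulr1 invr1 !(big_pred1 _ wt0) winv_const0 expr0 mulr1 !mul1r.
rewrite /tensA (eq_bigr (fun _ => xs q m)) => [|k _]; last by rewrite ffunE.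
rewrite prodr_const card_ord xsE.
elim: n => [|n' IH]; first by rewrite !expr0 mxE.
by rewrite !exprS -mulmxE mul_diag_mx mxE IH mxE.
Qed.

End Blocks.

Section SpinZero.
Variables (R : realType) (q : R).
Hypothesis q_neq0 : q != 0.

Lemma qhalfpow_spin0 : qhalfpow q 0 ord0 = 1.
Proof.
rewrite /qhalfpow /hk /= mul0r subrr powRr0 mul1r.
by case: ifP => _ //; rewrite muln0 subrr expr0z.
Qed.

Lemma As_spin0 x y : As q 0 x y ord0 ord0 = (x == y)%:R.
Proof.
case: (I2_cases x) => ->; case: (I2_cases y) => ->; rewrite /As /=.
- by rewrite /xs mxE /= qhalfpow_spin0.
- by rewrite /ys mxE.
- by rewrite mxE.
- by rewrite (invmx_xs q_neq0) !mxE /= qhalfpow_spin0 invr1.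
Qed.

Lemma tensA_spin0 n (w w' : word n) : tensA q 0 n w w' ord0 ord0 = (w == w')%:R.
Proof.
rewrite /tensA prod_mx11; under eq_bigr do rewrite As_spin0.
have [->|ww'] := eqVneq w w'; first by rewrite big1 // => i _; rewrite eqxx.
have [i wi] : exists i, w i != w' i.
  apply/existsP; apply: contraR ww' => /existsPn wi.
  by apply/eqP/ffunP => i; apply/eqP/negPn.
by rewrite (bigD1 i) //= (negbTE wi) mul0r.
Qed.

(* [v_0^(t)] is the identity: [phi_0] is the counit. *)
Lemma vblock_spin0 n k l : vblock q 0 n k l ord0 ord0 = (k == l)%:R.
Proof.
rewrite vblockE; under eq_bigr => w _ do under eq_bigr => w' _ do rewrite tensA_spin0.
under eq_bigr => w _ do rewrite sumr_mul_delta.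
have [<-|kl] := eqVneq k l; last first.
  by rewrite big1 ?mulr0 // => w /eqP wk; rewrite wk (inj_eq val_inj) (negbTE kl).
rewrite (eq_bigr (fun w => ((q ^+ winv n w) ^+ 2)%:C)) => [|w ->]; last by rewrite expr2.
have fnorm_sqr : fnorm q n k ^+ 2 = \sum_(w | wt n w == k) (q ^+ winv n w) ^+ 2.
  rewrite /fnorm sqr_sqrtr; last first.
    by apply: sumr_ge0 => w _; rewrite exprM exprn_ge0 ?sqr_ge0.
  by apply: eq_bigr => w _; rewrite -exprM mulnC.
rewrite -rmorph_sum -fnorm_sqr -rmorphM /= -expr2 mulVf ?rmorph1 //.
by rewrite expf_neq0 // gt_eqF // (lt_le_trans ltr01) ?fnorm_ge1.
Qed.

End SpinZero.

Lemma card_antidiag m n (p : 'I_n.+1 * 'I_m.+1) :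
  (#|[pred p' : 'I_n.+1 * 'I_m.+1 | (p'.1 + p'.2)%N == (p.1 + p.2)%N]| <= m.+1)%N.
Proof.
rewrite -[X in (_ <= X)%N](card_ord m.+1).
apply: (leq_card_in (fun p : 'I_n.+1 * 'I_m.+1 => p.2)) => -[x1 y1] [x2 y2].
rewrite !inE /= => /eqP h1 /eqP h2 /= y12; subst y2; congr pair.
by apply: val_inj => /=; lia.
Qed.

Section OperatorNormOfV.
Variables (R : realType) (q : R).
Hypotheses (q_neq0 : q != 0) (normq_lt1 : `|q| < 1).

Lemma l2norm_vst_apply_le m n E : 0 <= E ->
  (forall k l i j, normc (vblock q m n k l i j) <= E) ->
  forall v, l2norm R _ v <= 1 ->
  l2norm R _ (fun p => \sum_p' vst q m n p p' * v p') <= m.+1%:R * E.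
Proof.
move=> E_ge0 vblock_le v v_le1.
have same_class p p' : vst q m n p p' != 0 -> (p.1 + p.2)%N = (p'.1 + p'.2)%N.
  apply: contraNeq => /(vblock_eq0 q_neq0 normq_lt1).
  by rewrite /vst => ->; rewrite eqxx.
have entry_le p p' : normc (vst q m n p p') <= E by exact: vblock_le.
apply: le_trans (l2norm_apply_le_class E_ge0 same_class entry_le (@card_antidiag m n) v) _.
by rewrite ler_piMr // mulr_ge0.
Qed.

Lemma opnorm_vst_le m n E : 0 <= E ->
  (forall k l i j, normc (vblock q m n k l i j) <= E) ->
  opnorm (vst q m n) <= m.+1%:R * E.
Proof.
move=> E_ge0 vblock_le; apply: opnorm_le; first by rewrite mulr_ge0.
exact: l2norm_vst_apply_le.
Qed.

Lemma vblock_bound_ge0 m n : 0 <= As_bound q m ^+ n * qbound `|q| ^+ 2.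
Proof. by rewrite mulr_ge0 ?sqr_ge0 ?exprn_ge0 ?As_bound_ge0. Qed.

Lemma opnorm_vst_le_As_bound m n :
  opnorm (vst q m n) <= m.+1%:R * qbound `|q| ^+ 2 * As_bound q m ^+ n.
Proof.
rewrite -mulrA [_ * As_bound _ _ ^+ _]mulrC.
exact: opnorm_vst_le (vblock_bound_ge0 m n)
  (normc_vblock_le q_neq0 normq_lt1 (m := m) (n := n)).
Qed.

Lemma opnorm_vst_spin0_le n : opnorm (vst q 0 n) <= 1.
Proof.
have entry_le k l (i j : 'I_1) : normc (vblock q 0 n k l i j) <= 1.
  by rewrite !ord1 vblock_spin0 // normcMn normc1 lern1 leq_b1.
by apply: le_trans (opnorm_vst_le ler01 entry_le) _; rewrite mulr1.
Qed.

(* The lowest-weight corner entry of [v_s^(t)] is [q^(-2st)] up to a phase. *)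
Lemma As_bound_le_opnorm_vst m n : As_bound q m ^+ n <= opnorm (vst q m n).
Proof.
have := l2norm_vst_apply_le (vblock_bound_ge0 m n)
  (normc_vblock_le q_neq0 normq_lt1 (m := m) (n := n)).
move=> /(normc_diag_le_opnorm (ord0, ord0)); apply: le_trans.
by rewrite /vst /= vblock_corner normcX normc_qhalfpow /hk /= sub0r.
Qed.

End OperatorNormOfV.

Lemma natr_mul_le_powR (R : realType) (K : R) m :
  1 <= K -> m.+2%:R * K ^+ 2 <= powR ((2 * K ^+ 2) ^+ 2) (m.+1%:R / 2).
Proof.
move=> K_ge1.
have -> : powR ((2 * K ^+ 2) ^+ 2) (m.+1%:R / 2) = (2 * K ^+ 2) ^+ m.+1.
  set x := 2 * K ^+ 2; have x_ge0 : 0 <= x by rewrite mulr_ge0 ?sqr_ge0.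
  by rewrite -powR_mulrn // -powRrM -powR_mulrn //; congr powR; field.
rewrite exprMn ler_pM ?ler0n ?sqr_ge0 //; first by rewrite -natrX ler_nat ltn_expl.
by rewrite ler_eXnr ?exprn_ege1.
Qed.

Close Scope complex_scope.

Theorem theorem5p5 (R : realType) (q : R) (hq1 : -1 < q) (hq2 : q < 1)
  (hq0 : q != 0) :
  exists Cq : R, 0 < Cq /\
  forall m n : nat,
    let s := m%:R / 2 : R in
    let t := n%:R / 2 : R in
    powR `|q| (- (2 * s * t)) <= opnorm (vst q m n) /\
    opnorm (vst q m n) <= powR Cq s * powR `|q| (- (2 * s * t)).
Proof.
have normq_lt1 : `|q| < 1 by rewrite ltr_norml hq1 hq2.
set K := qbound `|q|; have K_ge1 : 1 <= K := qbound_ge1 `|q|.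
exists ((2 * K ^+ 2) ^+ 2); split=> [|m n s t].
  by rewrite exprn_gt0 // mulr_gt0 // exprn_gt0 // (lt_le_trans ltr01 K_ge1).
have -> : powR `|q| (- (2 * s * t)) = As_bound q m ^+ n.
  rewrite /As_bound -powR_mulrn ?powR_ge0 // -powRrM; congr powR.
  by rewrite /s /t; field.
split; first exact: As_bound_le_opnorm_vst.
case: m => [|m] in s *.
  rewrite /s mul0r powRr0 mul1r /As_bound mul0r oppr0 powRr0 expr1n.
  exact: opnorm_vst_spin0_le.
apply: le_trans (opnorm_vst_le_As_bound hq0 normq_lt1 m.+1 n) _.
apply: ler_wpM2r; first by rewrite exprn_ge0 ?As_bound_ge0.
exact: natr_mul_le_powR.
Qed.
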